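(* $\mathsf{DFD}^{\neq\emptyset}$ has the finite model property with respect to its general relational models: for every formula $\varphi\in\mathcal{L}^{\neq\emptyset}$, if $\varphi$ is satisfied at some state of some general relational model of $\mathsf{DFD}^{\neq\emptyset}$, then $\varphi$ is satisfied at some state of a finite general relational model of $\mathsf{DFD}^{\neq\emptyset}$.
   Context: Vocabulary: finite set $V$ of basic variables and predicate symbols with arities. Terms: $v\in V$, and $\bigcirc x$ for a term $x$. Formulas of $\mathcal{L}^{\neq\emptyset}$: $P(x_1,\dots,x_k)$, $\neg\varphi$, $\varphi\wedge\psi$, $\bigcirc\varphi$, $\mathsf{D}_X\varphi$, $D_Xy$ where $X$ ranges over finite non-empty sets of terms. $\bigcirc X=\{\bigcirc x:x\in X\}$. A general relational model of $\mathsf{DFD}^{\neq\emptyset}$ is $(W,g,=_X,\|\cdot\|)_X$: $W$ non-empty; $g:W\to W$; for each finite non-empty set $X$ of terms a binary relation $=_X$ on $W$; $\|\cdot\|$ maps atoms $P(x_1,\dots,x_n)$ and $D_Xy$ ($X$ non-empty) to subsets of $W$ (write $s\vDash\alpha$ for $s\in\|\alpha\|$, and $s\vDash D_XY$ iff $s\vDash D_Xy$ for all $y\in Y$). For all non-empty finite $X,Y,Z$: (C2) $=_X$ is an equivalence relation; (C3) $s\vDash D_Xx$ for $x\in X$; $s\vDash D_XY$ and $s\vDash D_YZ$ imply $s\vDash D_XZ$; $s\vDash D_V\bigcirc x$ for all terms $x$; (C4) $s=_Xw$ and $s\vDash D_XY$ imply $w\vDash D_XY$ and $s=_Yw$; (C5)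 $s=_Xw$, $s\vDash P(x_1,\dots,x_n)$ with $x_i\in X$ imply $w\vDash P(x_1,\dots,x_n)$; (C6) $s\vDash P(\bigcirc x_1,\dots,\bigcirc x_n)$ iff $g(s)\vDash P(x_1,\dots,x_n)$; (C7) $s=_{\bigcirc X}w$ implies $g(s)=_Xg(w)$; (C8) $g(s)\vDash D_XY$ implies $s\vDash D_{\bigcirc X}\bigcirc Y$. Truth: atoms via $\|\cdot\|$; Boolean as usual; $s\vDash\bigcirc\varphi$ iff $g(s)\vDash\varphi$; $s\vDash\mathsf{D}_X\varphi$ iff every $t$ with $s=_Xt$ satisfies $\varphi$. The model is finite if $W$ is finite. *)

From HB Require Import structures.
From mathcomp Require Import all_boot.
From mathcomp Require Import finmap.
From Stdlib Require List.
Set Implicit Arguments.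
Unset Strict Implicit.
Unset Printing Implicit Defensive.
Local Open Scope fset_scope.

(* A term is  ○^n v  (v a basic variable, n >= 0); it is represented by the
   pair (v, n).  Since terms are generated by  v  and  ○x  only, this is
   exactly the set of terms. *)
Definition term (Var : finType) : Type := (Var * nat)%type.

Definition tvar (Var : finType) (v : Var) : term Var := (v, 0).
Definition tnext (Var : finType) (x : term Var) : term Var := (x.1, x.2.+1).

Definition fnext (Var : finType) (X : {fset term Var}) : {fset term Var} :=
  [fset tnext x | x in X].

Definition Vset (Var : finType) : {fset term Var} :=
  [fset tvar v | v in [seq v | v <- enum Var]].

Inductive form (Var Pred : finType) : Type :=
| FAtom of Pred & seq (term Var)
| FNeg of form Var Pred
| FAnd of form Var Pred & form Var Pred
| FNext of form Var Pred
| FDBox of {fset term Var} & form Var Pred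
| FDep of {fset term Var} & term Var.

Fixpoint wf (Var Pred : finType) (arity : Pred -> nat) (f : form Var Pred) : Prop :=
  match f with
  | FAtom P xs => size xs = arity P
  | FNeg g => wf arity g
  | FAnd g h => wf arity g /\ wf arity h
  | FNext g => wf arity g
  | FDBox X g => X != fset0 /\ wf arity g
  | FDep X _ => X != fset0
  end.

Record structure (Var Pred : finType) : Type := Structure {
  st : Type;
  st_nonempty : inhabited st;
  gmap : st -> st;
  eqX : {fset term Var} -> st -> st -> Prop;
  valP : Pred -> seq (term Var) -> st -> Prop;
  valD : {fset term Var} -> term Var -> st -> Prop
}.

Arguments st {Var Pred}.
Arguments gmap {Var Pred} _ _.
Arguments eqX {Var Pred} _ _ _ _.
Arguments valP {Var Pred} _ _ _ _.
Arguments valD {Var Pred} _ _ _ _.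

Section Model.
Context {Var Pred : finType} (arity : Pred -> nat) (M : structure Var Pred).

Definition valDs (X Y : {fset term Var}) (s : st M) : Prop :=
  forall y, y \in Y -> valD M X y s.

Definition ne (X : {fset term Var}) : Prop := X != fset0.

Definition is_model : Prop :=
  (forall X, ne X ->
     (forall s, eqX M X s s) /\
     (forall s w, eqX M X s w -> eqX M X w s) /\
     (forall s u w, eqX M X s u -> eqX M X u w -> eqX M X s w)) /\
  (forall X s x, ne X -> x \in X -> valD M X x s) /\
  (forall X Y Z s, ne X -> ne Y -> ne Z ->
     valDs X Y s -> valDs Y Z s -> valDs X Z s) /\
  (forall s x, valD M (Vset Var) (tnext x) s) /\
  (forall X Y s w, ne X -> ne Y -> eqX M X s w -> valDs X Y s ->
     valDs X Y w /\ eqX M Y s w) /\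
  (forall X P xs s w, ne X -> size xs = arity P ->
     eqX M X s w -> valP M P xs s -> (forall x, x \in xs -> x \in X) ->
     valP M P xs w) /\
  (forall P xs s, size xs = arity P ->
     (valP M P (map (@tnext Var) xs) s <-> valP M P xs (gmap M s))) /\
  (forall X s w, ne X -> eqX M (fnext X) s w -> eqX M X (gmap M s) (gmap M w)) /\
  (forall X Y s, ne X -> ne Y -> valDs X Y (gmap M s) ->
     valDs (fnext X) (fnext Y) s).

Fixpoint sat (s : st M) (f : form Var Pred) : Prop :=
  match f with
  | FAtom P xs => valP M P xs s
  | FNeg g => ~ sat s g
  | FAnd g h => sat s g /\ sat s h
  | FNext g => sat (gmap M s) g
  | FDBox X g => forall t, eqX M X s t -> sat t g
  | FDep X y => valD M X y s
  end.

Definition finite_structure : Prop := exists l : list (st M), forall w, List.In w l.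
End Model.

(* A model satisfying [phi] is made finite in two steps.

   Truncation at depth [K := depth phi]: states become pairs [(k, s)] with a
   level [k] that [○] raises up to [K], and at level [k] only the terms [○^n v]
   with [k + n < K] are visible; invisible terms are erased from atoms, from
   dependence atoms and from the indices of [=_X].  This is again a model, it
   agrees with the original one on [phi] at level [0], and only the finitely
   many terms [○^n v] with [n < K] occur in it.

   Filtration: the type of a state records, for it and its first [K]
   successors, the level, the visible atoms and dependence atoms, and the
   subformulas of [phi] it satisfies.  There are finitely many types, and at
   level [K] all records are invariant under [○], so the type of the successor
   is a function of the type.  Identifying states of equal type, with [=_X]
   generated by [=_X] and equality of types, yields a finite model in which
   [phi] keeps its truth value. *)

From Pilot Require Import Defs.
From mathcomp Require Import all_boot finmap zify boolp.
From Stdlib Require Import Relations.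
Set Implicit Arguments.
Unset Strict Implicit.
Unset Printing Implicit Defensive.
Local Open Scope fset_scope.

Lemma mem_In (T : eqType) (s : seq T) x : x \in s -> List.In x s.
Proof. by elim: s => //= y s IH; rewrite inE => /orP [/eqP ->|/IH]; [left | right]. Qed.

Section Syntax.
Variables Var Pred : finType.
Implicit Type p : form Var Pred.

Fixpoint subformulas p : list (form Var Pred) :=
  p :: match p with
       | FNeg q | FNext q | FDBox _ q => subformulas q
       | FAnd q r => subformulas q ++ subformulas r
       | _ => nil
       end.

Lemma subformulas_self p : List.In p (subformulas p).
Proof. by case: p => *; left. Qed.

(* [depth p] exceeds [m + n] for every term [○^n v] occurring in [p] under [m]
   nested [○]. *)
Fixpoint depth p : nat :=
  match p with
  | FAtom _ xs => (\max_(x <- xs) x.2).+1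
  | FNeg q => depth q
  | FAnd q r => maxn (depth q) (depth r)
  | FNext q => (depth q).+1
  | FDBox X q => maxn (\max_(x <- X) x.2).+1 (depth q)
  | FDep X y => (maxn (\max_(x <- X) x.2) y.2).+1
  end.

Lemma depth_gt0 p : 0 < depth p.
Proof. by elim: p => //= *; lia. Qed.

Lemma fnext_eq0 (X : {fset term Var}) : (fnext X == fset0) = (X == fset0).
Proof.
apply/idP/idP; apply: contraLR => /fset0Pn [x].
- by move=> xX; apply/fset0Pn; exists (tnext x); apply/imfsetP; exists x.
- by case/imfsetP=> y yX _; apply/fset0Pn; exists y.
Qed.
End Syntax.

Section Quotient.
Variables (Var Pred : finType) (arity : Pred -> nat) (M : structure Var Pred).
Hypothesis M_model : is_model arity M.
Variables (T : finType) (f : st M -> T) (c0 : st M).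
Hypothesis f_gmap : forall c d, f c = f d -> f (gmap M c) = f (gmap M d).
Hypothesis f_valP : forall P xs c d, f c = f d -> Defs.valP M P xs c -> Defs.valP M P xs d.
Hypothesis f_valD : forall X y c d, f c = f d -> valD M X y c -> valD M X y d.

(* Values outside the image of [f] get the junk representative [c0]; they are
   harmless states of the quotient, as every field is read off representatives. *)
Definition qrep (t : T) : st M :=
  if pselect (exists c, f c = t) is left ex then sval (cid ex) else c0.

Lemma qrepK c : f (qrep (f c)) = f c.
Proof.
rewrite /qrep; case: pselect => [ex | []]; last by exists c.
exact: svalP (cid ex).
Qed.

Definition qstep X (u v : st M) : Prop := f u = f v \/ eqX M X u v.
Definition qeq X : relation (st M) := clos_refl_trans _ (qstep X).

Definition quotient : structure Var Pred :=
  @Structure Var Pred T (inhabits (f c0)) (fun t => f (gmap M (qrep t)))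
    (fun X t u => qeq X (qrep t) (qrep u))
    (fun P xs t => Defs.valP M P xs (qrep t)) (fun X y t => valD M X y (qrep t)).

Lemma qeq_ind X (I : st M -> Prop) :
  (forall u v, qstep X u v -> I u -> I v) -> forall u v, qeq X u v -> I u -> I v.
Proof. by move=> step u v; elim=> [a b /step | // | a b c _ IHab _ IHbc /IHab /IHbc]. Qed.

Lemma qeq_f X c d : f c = f d -> qeq X c d.
Proof. by move=> e; apply: rt_step; left. Qed.

Lemma qeq_sym X : ne X -> forall u v, qeq X u v -> qeq X v u.
Proof.
have [C2 _] := M_model; move=> nX u v; elim=> [a b [e | e] | a | a b c _ hba _ hcb].
- exact: qeq_f.
- by apply: rt_step; right; apply: (C2 X nX).2.1.
- exact: rt_refl.
- exact: rt_trans hcb hba.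
Qed.

Lemma qeq_valDs X Y u v : ne X -> ne Y -> qeq X u v -> valDs X Y u ->
  valDs X Y v /\ qeq Y u v.
Proof.
have [_ [_ [_ [_ [C4 _]]]]] := M_model; move=> nX nY.
elim=> [a b [e | e] | a | a b c _ hab _ hbc] hd.
- by split; [move=> y yY; apply: f_valD e (hd y yY) | exact: qeq_f].
- by have [hb ab] := C4 X Y a b nX nY e hd; split=> //; apply: rt_step; right.
- by split; last exact: rt_refl.
- have [hb ab] := hab hd; have [hc bc] := hbc hb; split=> //; exact: rt_trans ab bc.
Qed.

Lemma qeq_gmap X u v : ne X -> qeq (fnext X) u v -> qeq X (gmap M u) (gmap M v).
Proof.
have [_ [_ [_ [_ [_ [_ [_ [C7 _]]]]]]]] := M_model.
move=> nX; elim=> [a b [e | e] | a | a b c _ hab _ hbc].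
- exact/qeq_f/f_gmap.
- by apply: rt_step; right; apply: C7.
- exact: rt_refl.
- exact: rt_trans hab hbc.
Qed.

Lemma quotient_is_model : is_model arity quotient.
Proof.
have [_ [C3refl [C3trans [C3next [_ [C5 [C6 [_ C8]]]]]]]] := M_model.
refine (conj _ (conj _ (conj _ (conj _ (conj _ (conj _ (conj _ (conj _ _)))))))) => /=.
- move=> X nX; split; first by move=> t; apply: rt_refl.
  by split=> [t u | t u w]; [apply: qeq_sym | apply: rt_trans].
- by move=> X t x nX xX; apply: C3refl.
- by move=> X Y Z t nX nY nZ; apply: C3trans.
- by move=> t x; apply: C3next.
- by move=> X Y t u nX nY /(qeq_valDs nX nY) h /h.
- move=> X P xs t u nX sz h ht sub.
  apply: (qeq_ind (I := Defs.valP M P xs)) h ht => a b [e | e] ha; first exact: f_valP e ha.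
  exact: C5 nX sz e ha sub.
- move=> P xs t sz; rewrite C6 //; split; apply: f_valP; by rewrite qrepK.
- move=> X t u nX /(qeq_gmap nX) h.
  apply: rt_trans (qeq_f X (qrepK _)) _.
  exact: rt_trans h (qeq_f X (esym (qrepK _))).
- move=> X Y t nX nY hd; apply: C8 => // y yY.
  by apply: f_valD (hd y yY); rewrite qrepK.
Qed.

Lemma quotient_finite : finite_structure quotient.
Proof. by exists (enum T) => t; apply: mem_In; rewrite mem_enum. Qed.

Variables (lev : st M -> nat) (K : nat) (phi : form Var Pred).
Hypothesis f_lev : forall c d, f c = f d -> lev c < K -> lev d = lev c.
Hypothesis eqX_lev : forall X c d, eqX M X c d -> lev d = lev c.
Hypothesis gmap_lev : forall c, lev c < K -> lev (gmap M c) = (lev c).+1.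
Hypothesis f_sat : forall p c d, List.In p (subformulas phi) ->
  f c = f d -> lev c < K -> sat c p -> sat d p.

Lemma lev_qrep c : lev c < K -> lev (qrep (f c)) = lev c.
Proof. exact: f_lev (esym (qrepK c)). Qed.

Lemma sat_qrep p c : List.In p (subformulas phi) -> lev c < K ->
  (sat (qrep (f c)) p <-> sat c p).
Proof.
move=> hp lc; split; last exact: f_sat (esym (qrepK c)) lc.
by apply: f_sat (qrepK c) _; rewrite ?lev_qrep.
Qed.

Lemma qeq_sat_box X q u v : ne X -> List.In (FDBox X q) (subformulas phi) ->
  lev u < K -> qeq X u v -> sat u (FDBox X q) -> lev v = lev u /\ sat v (FDBox X q).
Proof.
have [C2 _] := M_model; move=> nX inb lu uv su.
apply: (qeq_ind (I := fun w => lev w = lev u /\ sat w (FDBox X q))) uv _ => //.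
move=> a b [e | e] [la sa].
- by rewrite (f_lev e) ?la //; split=> //; apply: f_sat e _ sa; rewrite ?la.
- split; first by rewrite (eqX_lev e).
  by move=> w bw; apply: sa; apply: (C2 X nX).2.2 e bw.
Qed.

Lemma quotient_sat p : List.incl (subformulas p) (subformulas phi) -> wf arity p ->
  forall t, lev (qrep t) + depth p <= K -> (sat (M := quotient) t p <-> sat (qrep t) p).
Proof.
have [C2 _] := M_model.
elim: p => /= [P xs | q IH | q IHq r IHr | q IH | X q IH | X y]
  /(@List.incl_cons_inv _ _ _ _) [inp sub].
- by move=> *; split.
- by move=> wq t lt; rewrite IH.
- case/(@List.incl_app_inv _ _ _ _): sub => subq subr [wq wr] t lt.
  by rewrite IHq ?IHr //; lia.
- move=> wq t lt; set c := gmap M (qrep t).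
  have lc : lev c = (lev (qrep t)).+1 by apply: gmap_lev; have := depth_gt0 q; lia.
  have lcK : lev c < K by have := depth_gt0 q; lia.
  rewrite IH ?lev_qrep //; last lia.
  exact: sat_qrep (sub _ (subformulas_self q)) lcK.
- move=> [nX wq] t lt.
  have ltK : lev (qrep t) < K by have := depth_gt0 q; lia.
  have inq := sub _ (subformulas_self q).
  split=> [h w tw | h u tu].
  + have lw : lev w = lev (qrep t) := eqX_lev tw.
    apply/(sat_qrep inq); first by rewrite lw.
    apply/IH; rewrite ?lev_qrep ?lw //; try lia.
    apply: h; apply: rt_trans (rt_step _ _ _ _ (or_intror tw)) (qeq_f X (esym (qrepK w))).
  + have [lu su] := qeq_sat_box nX inp ltK tu h.
    apply/IH; rewrite ?lu //; first lia.
    by apply: su; apply: (C2 X nX).1.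
- by move=> *; split.
Qed.

Lemma quotient_sat_root c : wf arity phi -> lev c + depth phi <= K ->
  (sat (M := quotient) (f c) phi <-> sat c phi).
Proof.
move=> wphi lc; have ltK : lev c < K by have := depth_gt0 phi; lia.
rewrite quotient_sat ?lev_qrep //; first exact: sat_qrep (subformulas_self phi) ltK.
Qed.

End Quotient.

Section Truncation.
Variables (Var Pred : finType) (arity : Pred -> nat) (M : structure Var Pred).
Hypothesis M_model : is_model arity M.
Variable K : nat.

Definition visible (k : nat) (x : term Var) : bool := k + x.2 < K.

Definition visible_part k (X : {fset term Var}) : {fset term Var} :=
  [fset x in X | visible k x].

Definition agree0 (s t : st M) : Prop :=
  forall P, arity P = 0 -> (Defs.valP M P [::] s <-> Defs.valP M P [::] t).

(* Once no term of [X] is visible, [=_X] must still preserve the 0-ary atoms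
   (condition C5 with no variables). *)
Definition eq_visible k X (s t : st M) : Prop :=
  if visible_part k X == fset0 then agree0 s t else eqX M (visible_part k X) s t.

Definition eq_trunc X (c d : nat * st M) : Prop := c.1 = d.1 /\ eq_visible c.1 X c.2 d.2.

Definition gmap_trunc (c : nat * st M) : nat * st M := (minn c.1.+1 K, gmap M c.2).

Definition valP_trunc P xs (c : nat * st M) : Prop :=
  [/\ size xs = arity P, all (visible c.1) xs & Defs.valP M P xs c.2].

Definition valD_trunc X y (c : nat * st M) : Prop :=
  visible c.1 y -> visible_part c.1 X != fset0 /\ valD M (visible_part c.1 X) y c.2.

Definition truncation : structure Var Pred :=
  @Structure Var Pred (nat * st M)
    (let: inhabits s := st_nonempty M in inhabits (0, s))
    gmap_trunc eq_trunc valP_trunc valD_trunc.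

Lemma in_visible_part k X x : (x \in visible_part k X) = (x \in X) && visible k x.
Proof. by rewrite !inE. Qed.

Lemma visible_part_neq0 k X x : x \in X -> visible k x -> visible_part k X != fset0.
Proof. by move=> xX vx; apply/fset0Pn; exists x; rewrite in_visible_part xX. Qed.

Lemma visible_tnext k x : visible k (tnext x) = visible (minn k.+1 K) x.
Proof. by rewrite /visible /=; apply/idP/idP; lia. Qed.

Lemma visible_part_fnext k X :
  visible_part k (fnext X) = fnext (visible_part (minn k.+1 K) X).
Proof.
apply/fsetP => x; rewrite in_visible_part; apply/andP/imfsetP => [[/imfsetP [y yX ->]] | [y]].
- by rewrite visible_tnext => vy; exists y; rewrite ?in_visible_part ?yX.
- rewrite /= in_visible_part => /andP [yX vy] ->; rewrite visible_tnext; split=> //.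
  by apply/imfsetP; exists y.
Qed.

Lemma visible_le_max k (xs : seq (term Var)) x :
  x \in xs -> k + (\max_(y <- xs) y.2).+1 <= K -> visible k x.
Proof.
move=> xx hk; rewrite /visible (leq_trans _ hk) // ltn_add2l ltnS.
exact: leq_bigmax_seq.
Qed.

Lemma visible_part_id k (X : {fset term Var}) :
  k + (\max_(y <- X) y.2).+1 <= K -> visible_part k X = X.
Proof.
move=> hk; apply/fsetP => x; rewrite in_visible_part.
by case xX: (x \in X); rewrite ?(visible_le_max xX hk).
Qed.

Lemma eq_visible_equiv k X : equivalence _ (eq_visible k X).
Proof.
rewrite /eq_visible; case: (boolP (visible_part k X == fset0)) => [_ | nX].
- split=> [s P _ | s t u hst htu P a | s t h P a]; first by [].
  + by rewrite hst // htu.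
  + by rewrite h.
- have [C2 _] := M_model; have [refl [sym trans]] := C2 _ nX.
  by split=> [s | s t u | s t]; [apply: refl | apply: trans | apply: sym].
Qed.

Lemma agree0_eqX X s t : ne X -> eqX M X s t -> agree0 s t.
Proof.
have [C2 [_ [_ [_ [_ [C5 _]]]]]] := M_model.
move=> nX st P a; have sz : size (Nil (term Var)) = arity P by rewrite a.
split=> [hs | ht]; first exact: (C5 X P [::] s t nX sz st hs).
exact: (C5 X P [::] t s nX sz ((C2 X nX).2.1 _ _ st) ht).
Qed.

Lemma valDs_trunc_trans X Y Z c : valDs (M := truncation) X Y c ->
  valDs (M := truncation) Y Z c -> valDs (M := truncation) X Z c.
Proof.
have [_ [_ [C3trans _]]] := M_model.
case: c => k s hXY hYZ z zZ vz.
have [nYv dz] := hYZ z zZ vz.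
have [y] := fset0Pn _ nYv; rewrite in_visible_part => /andP [yY vy].
have [nXv _] := hXY y yY vy; split=> //.
suff: valDs (visible_part k X) [fset z] s by apply; rewrite inE.
apply: (C3trans _ (visible_part k Y)) => //.
- by apply/fset0Pn; exists z; rewrite inE.
- by move=> y'; rewrite in_visible_part => /andP [y'Y vy']; apply: (hXY y' y'Y vy').2.
- by move=> z'; rewrite inE => /eqP ->.
Qed.

Lemma eq_trunc_valDs X Y c d : ne X -> ne Y -> eq_trunc X c d ->
  valDs (M := truncation) X Y c -> valDs (M := truncation) X Y d /\ eq_trunc Y c d.
Proof.
have [_ [_ [_ [_ [C4 _]]]]] := M_model.
case: c d => k s [_ t] nX nY [/= <- h] hd.
have [Y0 | nYv] := eqVneq (visible_part k Y) fset0.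
  split=> [y yY vy | ]; first by have := visible_part_neq0 yY vy; rewrite Y0 eqxx.
  split=> //; rewrite /eq_visible Y0 eqxx.
  by move: h; rewrite /eq_visible; case: ifP => // /negbT nXv; apply: agree0_eqX.
have [y0] := fset0Pn _ nYv; rewrite in_visible_part => /andP [y0Y vy0].
have nXv : visible_part k X != fset0 := (hd y0 y0Y vy0).1.
have hds : valDs (visible_part k X) (visible_part k Y) s.
  by move=> y; rewrite in_visible_part => /andP [yY vy]; apply: (hd y yY vy).2.
move: h; rewrite /eq_visible (negbTE nXv) => h.
have [hdt eY] := C4 _ _ _ _ nXv nYv h hds.
split; last by split=> //; rewrite /eq_visible (negbTE nYv).
by move=> y yY vy; split=> //; apply: hdt; rewrite in_visible_part yY.
Qed.

Lemma valD_trunc_Vset c x : valD_trunc (Vset Var) (tnext x) c.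
Proof.
have [_ [_ [_ [C3next _]]]] := M_model.
case: c => k s vx.
have -> : visible_part k (Vset Var) = Vset Var.
  apply/fsetP=> y; rewrite in_visible_part; case yV: (y \in Vset Var) => //=.
  by case/imfsetP: yV => v _ ->; move: vx; rewrite /visible /=; lia.
split; last exact: C3next.
apply/fset0Pn; exists (tvar x.1); apply/imfsetP; exists x.1 => //.
by apply/mapP; exists x.1; rewrite ?mem_enum.
Qed.

Lemma eq_trunc_valP X P xs c d : ne X -> size xs = arity P -> eq_trunc X c d ->
  valP_trunc P xs c -> (forall x, x \in xs -> x \in X) -> valP_trunc P xs d.
Proof.
have [_ [_ [_ [_ [_ [C5 _]]]]]] := M_model.
case: c d => k s [_ t] nX sz [/= <- h] [_ vis hs] sub; split=> //.
move: h; rewrite /eq_visible; case: ifP => [/eqP X0 h | /negbT nXv h].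
- case: xs sz vis hs sub => [sz _ hs _ | x xs _ /andP [vx _] _ sub].
    exact/(h P (esym sz)).
  by have := visible_part_neq0 (sub x (mem_head x xs)) vx; rewrite X0 eqxx.
- apply: (C5 _ P xs s t nXv sz h hs) => x xx.
  by rewrite in_visible_part sub //; apply: (allP vis).
Qed.

Lemma truncation_is_model : is_model arity truncation.
Proof.
have [_ [C3refl [_ [_ [_ [_ [C6 [C7 C8]]]]]]]] := M_model.
refine (conj _ (conj _ (conj _ (conj _ (conj _ (conj _ (conj _ (conj _ _)))))))) => /=.
- move=> X _; have equiv k := eq_visible_equiv k X; split; [|split].
  + by case=> k s; split=> //; apply: equiv_refl.
  + by case=> k s [_ t] [/= <- h]; split=> //; apply: equiv_sym.
  + by case=> k s [_ u] [_ w] [/= <- h1] [/= <- h2]; split=> //; apply: equiv_trans h1 h2.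
- move=> X [k s] x nX xX /= vx; have nXv := visible_part_neq0 xX vx.
  by split=> //; apply: C3refl nXv _; rewrite in_visible_part xX.
- by move=> X Y Z c _ _ _; apply: valDs_trunc_trans.
- by move=> c x; apply: valD_trunc_Vset.
- by move=> X Y c d nX nY; apply: eq_trunc_valDs.
- by move=> X P xs c d; apply: eq_trunc_valP.
- move=> P xs [k s] sz /=.
  have vis : all (visible k) (map (@tnext Var) xs) = all (visible (minn k.+1 K)) xs.
    by rewrite all_map; apply: eq_all => x; apply: visible_tnext.
  rewrite /valP_trunc size_map vis.
  by split=> -[_ v h]; split=> //; apply/(C6 P xs s sz).
- move=> X [k s] [_ t] nX [/= <- h]; split=> //=.
  move: h; rewrite /eq_visible visible_part_fnext fnext_eq0.
  case: ifP => [_ h P a | /negbT nXv]; last exact: C7.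
  have sz : size (Nil (term Var)) = arity P by rewrite a.
  by rewrite -!(C6 P [::] _ sz); apply: h.
- move=> X Y [k s] nX nY hd _ /imfsetP [y yY ->]; rewrite /= /valD_trunc visible_tnext => vy.
  have [nXv dy] := hd y yY vy.
  rewrite visible_part_fnext fnext_eq0; split=> //.
  have := C8 (visible_part (minn k.+1 K) X) [fset y] s nXv.
  apply; first by apply/fset0Pn; exists y; rewrite inE.
  + by move=> y'; rewrite inE => /eqP ->.
  + by apply/imfsetP; exists y; rewrite ?inE.
Qed.

Lemma sat_truncation p : wf arity p -> forall k s, k + depth p <= K ->
  (sat (M := truncation) (k, s) p <-> sat s p).
Proof.
elim: p => /= [P xs | q IH | q IHq r IHr | q IH | X q IH | X y] wp k s hk.
- split=> [[] // | hs]; split=> //; apply/allP => x xx; exact: visible_le_max xx hk.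
- by rewrite IH.
- by case: wp => wq wr; rewrite IHq ?IHr //; lia.
- have dq := depth_gt0 q.
  rewrite /gmap_trunc /=; have -> : minn k.+1 K = k.+1 by lia.
  by apply: IH => //; lia.
- case: wp => nX wq; have hX : visible_part k X = X.
    by apply: visible_part_id; apply: leq_trans hk; rewrite leq_add2l leq_maxl.
  split=> [h t e | h [_ t] [/= <- e]].
  + rewrite -(IH wq k t); last lia.
    by apply: h; split=> //; rewrite /eq_visible hX (negbTE nX).
  + move: e; rewrite /eq_visible hX (negbTE nX) => e.
    by rewrite IH //; [apply: h | lia].
- have hX : visible_part k X = X.
    by apply: visible_part_id; apply: leq_trans hk; rewrite leq_add2l ltnS leq_maxl.
  have vy : visible k y by apply: leq_trans hk; rewrite addnS ltnS leq_add2l leq_maxr.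
  by rewrite /valD_trunc hX; split=> [h | h _]; [case: (h vy) | split].
Qed.

Variable phi : form Var Pred.

Definition bterm : finType := (Var * 'I_K)%type.

Definition bval (b : bterm) : term Var := (b.1, val b.2).

Lemma visible_bounded k x : visible k x -> x.2 < K.
Proof. by rewrite /visible; lia. Qed.

Lemma bval_onto x : x.2 < K -> exists b, bval b = x.
Proof. by case: x => v n h; exists (v, Ordinal h). Qed.

Lemma bvals_onto xs : all (fun x => x.2 < K) xs -> exists bs, map bval bs = xs.
Proof.
elim: xs => [|x xs IH] /=; first by exists [::].
by case/andP=> /bval_onto [b <-] /IH [bs <-]; exists (b :: bs).
Qed.

Lemma visible_part_bval k X :
  visible_part k [fset bval b | b in [set b | bval b \in X]] = visible_part k X.
Proof.
apply/fsetP => x; rewrite !in_visible_part; apply/andP/andP => [[] | [xX vx]].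
  by case/imfsetP=> b /=; rewrite inE => bX ->.
split=> //; have [b bx] := bval_onto (visible_bounded vx).
by apply/imfsetP; exists b; rewrite ?inE bx.
Qed.

(* Subformulas are only observed below level [K]: at level [K] every observation
   is invariant under [gmap_trunc], so the type of [gmap_trunc c] is determined
   by the type of [c]. *)
Definition obs : finType :=
  ('I_K + {P : Pred & (arity P).-tuple bterm} + {set bterm} * bterm
   + 'I_(List.length (subformulas phi)))%type.

Definition observe (o : obs) (c : nat * st M) : Prop :=
  match o with
  | inl (inl (inl j)) => c.1 = j
  | inl (inl (inr (existT P bs))) => valP_trunc P (map bval bs) c
  | inl (inr (B, b)) => valD_trunc [fset bval b' | b' in B] (bval b) c
  | inr i => c.1 < K /\ sat (M := truncation) c (List.nth i (subformulas phi) phi)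
  end.

Definition trunc_type (c : nat * st M) : {ffun 'I_K.+1 -> {ffun obs -> bool}} :=
  [ffun j : 'I_K.+1 => [ffun o => `[< observe o (iter j gmap_trunc c) >]]].

Lemma trunc_typeP c d : trunc_type c = trunc_type d <-> forall j o, j <= K ->
  (observe o (iter j gmap_trunc c) <-> observe o (iter j gmap_trunc d)).
Proof.
split=> [e j o jK | e].
- move/ffunP/(_ (Ordinal (jK : j < K.+1))): e; rewrite !ffunE => /ffunP/(_ o).
  by rewrite !ffunE; apply: asbool_eq_equiv.
- apply/ffunP => j; apply/ffunP => o; rewrite !ffunE; apply: asbool_equiv_eq.
  by apply: e; rewrite -ltnS.
Qed.

Lemma iter_gmap_trunc_level j c : minn j K <= (iter j gmap_trunc c).1.
Proof. by elim: j => [|j IH] //=; lia. Qed.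

Lemma observe_gmap_top o c : K <= c.1 -> (observe o (gmap_trunc c) <-> observe o c).
Proof.
have [_ [_ [_ [_ [_ [_ [C6 _]]]]]]] := M_model.
case: c => k s /= kK; have gK : minn k.+1 K = K by lia.
case: o => [[[j | [P bs]] | [B b]] | i] /=; rewrite ?gK.
- by have := ltn_ord j; split=> e; lia.
- rewrite /valP_trunc; case: (map bval bs) => [|x xs] /=.
    by split=> -[sz _ h]; split=> //; apply/(C6 P [::] s sz).
  by rewrite /visible; split=> -[_ /andP [vx _] _]; lia.
- by rewrite /valD_trunc /visible /=; split=> _ v; exfalso; lia.
- by split=> -[]; lia.
Qed.

Lemma trunc_type_gmap c d :
  trunc_type c = trunc_type d -> trunc_type (gmap_trunc c) = trunc_type (gmap_trunc d).
Proof.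
move/trunc_typeP => e; apply/trunc_typeP => j o jK; rewrite -!iterSr.
have [jK' | Kj] := ltnP j K; first exact: e.
have top x : K <= (iter K gmap_trunc x).1 by have := iter_gmap_trunc_level K x; rewrite minnn.
have -> : j = K by lia.
by rewrite !iterS !observe_gmap_top ?top //; apply: e.
Qed.

Lemma trunc_type_level c d : trunc_type c = trunc_type d -> c.1 < K -> d.1 = c.1.
Proof. by move=> /trunc_typeP e lt; apply: (e 0 (inl (inl (inl (Ordinal lt)))) (leq0n K)).1. Qed.

Lemma trunc_type_valP P xs c d :
  trunc_type c = trunc_type d -> valP_trunc P xs c -> valP_trunc P xs d.
Proof.
move=> /trunc_typeP e hc; case: (hc) => sz vis _.
have [bs bsE] : exists bs, map bval bs = xs.
  by apply: bvals_onto; apply: sub_all vis => x; apply: visible_bounded.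
have bsP : size bs == arity P by rewrite -sz -bsE size_map.
have := e 0 (inl (inl (inr (existT _ P (Tuple bsP))))) (leq0n K).
by rewrite /= bsE => -[/(_ hc)].
Qed.

Lemma trunc_type_valD X y c d :
  trunc_type c = trunc_type d -> valD_trunc X y c -> valD_trunc X y d.
Proof.
move=> /trunc_typeP e hc vy; have [b yb] := bval_onto (visible_bounded vy); subst y.
have := e 0 (inl (inr ([set b' | bval b' \in X], b))) (leq0n K).
by rewrite /= /valD_trunc !visible_part_bval => -[/(_ hc) + _]; apply.
Qed.

Lemma trunc_type_sat p c d : List.In p (subformulas phi) ->
  trunc_type c = trunc_type d -> c.1 < K ->
  sat (M := truncation) c p -> sat (M := truncation) d p.
Proof.
case/(List.In_nth _ _ phi) => i [/ltP iL <-] /trunc_typeP e lc hc.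
by have [/(_ (conj lc hc)) []] := e 0 (inr (Ordinal iL)) (leq0n K).
Qed.

End Truncation.

Theorem theorem4p3 (Var Pred : finType) (arity : Pred -> nat)
  (phi : form Var Pred) :
  wf arity phi ->
  (exists (M : structure Var Pred) (s : st M), is_model arity M /\ sat s phi) ->
  exists (M' : structure Var Pred) (s' : st M'),
    is_model arity M' /\ finite_structure M' /\ sat s' phi.
Proof.
move=> wf_phi [M [s [M_model sat_s]]].
pose K := depth phi.
have N_model := truncation_is_model M_model K.
pose type := trunc_type arity (M := M) K phi.
exists (quotient (M := truncation arity M K) type (0, s)), (type (0, s)).
split; [|split].
- apply: (quotient_is_model (f := type) N_model).
  + exact: trunc_type_gmap.
  + exact: trunc_type_valP.
  + exact: trunc_type_valD.
- exact: quotient_finite.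
- apply/(quotient_sat_root N_model (0, s) (f := type) (lev := fst) (K := K)).
  + exact: trunc_type_level.
  + by move=> X c d [].
  + by move=> [k t] /=; lia.
  + exact: trunc_type_sat.
  + exact: wf_phi.
  + by [].
  + by apply/sat_truncation.
Qed.
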